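(* Let $\mathbb{E}$ be a finitely complete category, $\Sigma$ a fibrational class of split epimorphisms, and suppose $\mathbb{E}$ is a $\Sigma$-Mal'tsev category. Let $(f,s)\colon X\rightleftarrows Y$ be a split epimorphism in $\Sigma$. Then there is at most one internal monoid structure on the object $(f,s)$ of the fibre $\mathrm{Pt}_Y(\mathbb{E})$, and when such a structure exists it is commutative.
   Context: A split epimorphism is a pair $(f,s)$ with $fs=1$. $\mathrm{Pt}_Y(\mathbb{E})$ is the category of split epimorphisms with codomain $Y$ and morphisms commuting with both the epimorphisms and the splittings; it is finitely complete, with terminal object $(1_Y,1_Y)$ and binary product of $(f,s)$ with itself given by $X\times_YX$ over $Y$. A class $\Sigma$ of split epimorphisms is fibrational if it contains all split epimorphisms $(f,s)$ with $f$ invertible and is stable under pullback along any morphism. A pair of morphisms with common codomain $Z$ is jointly extremally epic if it factors jointly through no non-invertible monomorphism into $Z$. $\mathbb{E}$ is $\Sigma$-Mal'tsev if for every split epimorphism $(f,s)\colon X\rightleftarrows Y$ in $\Sigma$ and every split epimorphism $(g,t)$ with $g\colon Y'\to Y$, letting $X'=Y'\times_YX$, $s'=(1_{Y'},sg)$, $\bar t=(tf,1_X)$, the pair $(s',\bar t)$ is jointly extremally epic. *)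

Record Category := {
  Obj :> Type;
  Hom : Obj -> Obj -> Type;
  idm : forall A, Hom A A;
  comp : forall A B C, Hom B C -> Hom A B -> Hom A C;
  comp_id_l : forall A B (f : Hom A B), comp A B B (idm B) f = f;
  comp_id_r : forall A B (f : Hom A B), comp A A B f (idm A) = f;
  comp_assoc : forall A B C D (f : Hom A B) (g : Hom B C) (h : Hom C D),
      comp A C D h (comp A B C g f) = comp A B D (comp B C D h g) f
}.
Arguments Hom {c} _ _.
Arguments idm {c} A.
Arguments comp {c A B C} _ _.

Notation "g ∘ f" := (comp g f) (at level 40, left associativity).

Section CatDefs.
Context {C : Category}.

Definition is_iso {A B : C} (f : Hom A B) : Prop :=
  exists g : Hom B A, g ∘ f = idm A /\ f ∘ g = idm B.

Definition is_mono {M Z : C} (m : Hom M Z) : Prop :=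
  forall (T : C) (a b : Hom T M), m ∘ a = m ∘ b -> a = b.

Definition is_terminal (T : C) : Prop :=
  forall A : C, exists! u : Hom A T, True.

Definition is_pullback {A B Z : C} (f : Hom A Z) (g : Hom B Z)
  (P : C) (p : Hom P A) (q : Hom P B) : Prop :=
  f ∘ p = g ∘ q /\
  forall (T : C) (a : Hom T A) (b : Hom T B), f ∘ a = g ∘ b ->
    exists! u : Hom T P, p ∘ u = a /\ q ∘ u = b.

Definition jointly_extremally_epic {A B Z : C} (a : Hom A Z) (b : Hom B Z) : Prop :=
  forall (M : C) (m : Hom M Z) (a' : Hom A M) (b' : Hom B M),
    is_mono m -> m ∘ a' = a -> m ∘ b' = b -> is_iso m.

Definition SplitClass := forall (X Y : C), Hom X Y -> Hom Y X -> Prop.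

Definition fibrational (Sigma : SplitClass) : Prop :=
  (forall X Y (f : Hom X Y) (s : Hom Y X), Sigma X Y f s -> f ∘ s = idm Y) /\
  (forall X Y (f : Hom X Y) (s : Hom Y X), f ∘ s = idm Y -> is_iso f ->
     Sigma X Y f s) /\
  (forall X Y (f : Hom X Y) (s : Hom Y X) Z (h : Hom Z Y)
          (P : C) (g : Hom P Z) (k : Hom P X) (u : Hom Z P),
     Sigma X Y f s -> is_pullback h f P g k ->
     g ∘ u = idm Z -> k ∘ u = s ∘ h -> Sigma P Z g u).

End CatDefs.

(* Finitely complete category, with chosen terminal object and pullbacks.
   pb f g is the chosen pullback of f : A -> Z and g : B -> Z, with
   projections pb1, pb2 and pairing pb_pair (meaningful when f a = g b). *)
Record FinitelyComplete (C : Category) := {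
  term : C;
  term_spec : is_terminal term;
  pb : forall (A B Z : C), Hom A Z -> Hom B Z -> C;
  pb1 : forall (A B Z : C) (f : Hom A Z) (g : Hom B Z), Hom (pb A B Z f g) A;
  pb2 : forall (A B Z : C) (f : Hom A Z) (g : Hom B Z), Hom (pb A B Z f g) B;
  pb_pair : forall (A B Z : C) (f : Hom A Z) (g : Hom B Z) (T : C),
      Hom T A -> Hom T B -> Hom T (pb A B Z f g);
  pb_spec : forall (A B Z : C) (f : Hom A Z) (g : Hom B Z),
      is_pullback f g (pb A B Z f g) (pb1 A B Z f g) (pb2 A B Z f g);
  pb_pair_spec : forall (A B Z : C) (f : Hom A Z) (g : Hom B Z) (T : C)
      (a : Hom T A) (b : Hom T B), f ∘ a = g ∘ b ->
      pb1 A B Z f g ∘ pb_pair A B Z f g T a b = a /\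
      pb2 A B Z f g ∘ pb_pair A B Z f g T a b = b
}.
Arguments term {C} _.
Arguments pb {C} _ {A B Z} _ _.
Arguments pb1 {C} _ {A B Z} _ _.
Arguments pb2 {C} _ {A B Z} _ _.
Arguments pb_pair {C} _ {A B Z} _ _ {T} _ _.

Section Maltsev.
Context {C : Category} (FC : FinitelyComplete C).

(* Σ-Mal'tsev: for (f,s) : X ⇄ Y in Σ and any split epi (g,t) with
   g : Y' -> Y, with X' = Y' ×_Y X (chosen pullback of f along g),
   s' = (1_{Y'}, s g) and t̄ = (t f, 1_X), the pair (s', t̄) is jointly
   extremally epic. *)
Definition Sigma_Maltsev (Sigma : SplitClass) : Prop :=
  forall (X Y : C) (f : Hom X Y) (s : Hom Y X), Sigma X Y f s ->
  forall (Y' : C) (g : Hom Y' Y) (t : Hom Y Y'), g ∘ t = idm Y ->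
    jointly_extremally_epic
      (pb_pair FC g f (idm Y') (s ∘ g))
      (pb_pair FC g f (t ∘ f) (idm X)).

(* The binary product of (f,s) with itself in Pt_Y is X ×_Y X = pb f f
   (structure map f p1, splitting <s,s>); the terminal object is (1_Y,1_Y);
   the unique map (f,s) -> (1_Y,1_Y) is f.  The triple product
   (X ×_Y X) ×_Y X is the chosen pullback of f p1 along f. *)
Definition is_internal_monoid {X Y : C} (f : Hom X Y) (s : Hom Y X)
    (m : Hom (pb FC f f) X) (e : Hom Y X) : Prop :=
  let p1 := pb1 FC f f in
  let p2 := pb2 FC f f in
  let q1 := pb1 FC (f ∘ p1) f in
  let q2 := pb2 FC (f ∘ p1) f in
  (* m : (X ×_Y X, f p1, <s,s>) -> (X, f, s) is a morphism of Pt_Y *)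
  f ∘ m = f ∘ p1 /\ m ∘ pb_pair FC f f s s = s /\
  (* e : (Y, 1, 1) -> (X, f, s) is a morphism of Pt_Y *)
  f ∘ e = idm Y /\ e ∘ idm Y = s /\
  m ∘ pb_pair FC f f (e ∘ f) (idm X) = idm X /\
  m ∘ pb_pair FC f f (idm X) (e ∘ f) = idm X /\
  m ∘ pb_pair FC f f (m ∘ q1) q2 =
  m ∘ pb_pair FC f f (p1 ∘ q1) (m ∘ pb_pair FC f f (p2 ∘ q1) q2).

Definition is_commutative_monoid {X Y : C} (f : Hom X Y) (s : Hom Y X)
    (m : Hom (pb FC f f) X) : Prop :=
  m ∘ pb_pair FC f f (pb2 FC f f) (pb1 FC f f) = m.

End Maltsev.


(* Σ-Mal'tsev applied to (f,s) together with itself says that the two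
   sections <1, s f> and <s f, 1> of X ×_Y X are jointly extremally epic.
   Since equalizers exist and are monomorphisms, they are in particular
   jointly epic, so a morphism out of X ×_Y X over Y is determined by its
   composites with these sections.  The unit laws fix these composites for
   any monoid multiplication (both are the identity, and the unit must be
   s), which gives uniqueness; for commutativity, precomposing m with the
   twist swaps the two sections, hence leaves m unchanged. *)

Section Pullbacks.
Context {C : Category} (FC : FinitelyComplete C).

Lemma pb_hom_ext {A B Z T : C} (g : Hom A Z) (h : Hom B Z) (u v : Hom T (pb FC g h)) :
  pb1 FC g h ∘ u = pb1 FC g h ∘ v -> pb2 FC g h ∘ u = pb2 FC g h ∘ v -> u = v.
Proof.
  intros H1 H2.
  destruct (pb_spec C FC A B Z g h) as [Hsq Huniv].
  assert (Hu : g ∘ (pb1 FC g h ∘ u) = h ∘ (pb2 FC g h ∘ u)).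
  { rewrite !comp_assoc, Hsq. reflexivity. }
  destruct (Huniv T _ _ Hu) as [w [_ Hw]].
  transitivity w.
  - symmetry; apply Hw; split; reflexivity.
  - apply Hw; split; symmetry; assumption.
Qed.

Lemma pb1_pair {A B Z T : C} (g : Hom A Z) (h : Hom B Z) (a : Hom T A) (b : Hom T B) :
  g ∘ a = h ∘ b -> pb1 FC g h ∘ pb_pair FC g h a b = a.
Proof. intro E. apply (pb_pair_spec C FC _ _ _ g h T a b E). Qed.

Lemma pb2_pair {A B Z T : C} (g : Hom A Z) (h : Hom B Z) (a : Hom T A) (b : Hom T B) :
  g ∘ a = h ∘ b -> pb2 FC g h ∘ pb_pair FC g h a b = b.
Proof. intro E. apply (pb_pair_spec C FC _ _ _ g h T a b E). Qed.

Lemma kernel_pair_sym {A Y : C} (f : Hom A Y) : f ∘ pb2 FC f f = f ∘ pb1 FC f f.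
Proof. symmetry; apply (pb_spec C FC). Qed.

Lemma pb_pair_swap {A Y : C} (f : Hom A Y) {T : C} (a b : Hom T A) :
  f ∘ a = f ∘ b ->
  pb_pair FC f f (pb2 FC f f) (pb1 FC f f) ∘ pb_pair FC f f a b = pb_pair FC f f b a.
Proof.
  intro Eab.
  pose proof (kernel_pair_sym f) as Hsq.
  apply pb_hom_ext; rewrite comp_assoc.
  - rewrite (pb1_pair _ _ _ _ Hsq), (pb2_pair _ _ _ _ Eab), (pb1_pair _ _ _ _ (eq_sym Eab)).
    reflexivity.
  - rewrite (pb2_pair _ _ _ _ Hsq), (pb1_pair _ _ _ _ Eab), (pb2_pair _ _ _ _ (eq_sym Eab)).
    reflexivity.
Qed.

End Pullbacks.

Section Equalizers.
Context {C : Category}.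

Definition is_equalizer {A X E : C} (u v : Hom A X) (e : Hom E A) : Prop :=
  u ∘ e = v ∘ e /\
  forall (T : C) (x : Hom T A), u ∘ x = v ∘ x -> exists! y : Hom T E, e ∘ y = x.

Lemma equalizer_mono {A X E : C} (u v : Hom A X) (e : Hom E A) :
  is_equalizer u v e -> is_mono e.
Proof.
  intros [Heq Huniv] T x y Exy.
  assert (Hx : u ∘ (e ∘ x) = v ∘ (e ∘ x)) by (rewrite !comp_assoc, Heq; reflexivity).
  destruct (Huniv T _ Hx) as [w [_ Hw]].
  transitivity w.
  - symmetry; apply Hw; reflexivity.
  - apply Hw; symmetry; exact Exy.
Qed.

Lemma iso_equalizer_eq {A X E : C} (u v : Hom A X) (e : Hom E A) :
  is_equalizer u v e -> is_iso e -> u = v.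
Proof.
  intros [Heq _] [e' [_ He]].
  rewrite <- (comp_id_r _ _ _ u), <- (comp_id_r _ _ _ v), <- He, !comp_assoc, Heq.
  reflexivity.
Qed.

(* The equalizer of u and v is the pullback of <1, u> and <1, v>, taken in
   A ×_Y X over the common composite f u = f v. *)
Lemma equalizer_exists (FC : FinitelyComplete C) {A X Y : C}
    (f : Hom X Y) (u v : Hom A X) :
  f ∘ u = f ∘ v -> exists (E : C) (e : Hom E A), is_equalizer u v e.
Proof.
  intro Efuv.
  set (h := f ∘ u).
  assert (Hu : h ∘ idm A = f ∘ u) by (rewrite comp_id_r; reflexivity).
  assert (Hv : h ∘ idm A = f ∘ v) by (rewrite comp_id_r; exact Efuv).
  set (pu := pb_pair FC h f (idm A) u).
  set (pv := pb_pair FC h f (idm A) v).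
  destruct (pb_spec C FC _ _ _ pu pv) as [Hsq Huniv].
  assert (He12 : pb1 FC pu pv = pb2 FC pu pv).
  { pose proof (f_equal (fun z => pb1 FC h f ∘ z) Hsq) as H; cbv beta in H.
    rewrite !comp_assoc in H; unfold pu, pv in H.
    rewrite (pb1_pair FC _ _ _ _ Hu), (pb1_pair FC _ _ _ _ Hv), !comp_id_l in H.
    exact H. }
  exists (pb FC pu pv), (pb1 FC pu pv); split.
  - pose proof (f_equal (fun z => pb2 FC h f ∘ z) Hsq) as H; cbv beta in H.
    rewrite <- He12, !comp_assoc in H; unfold pu, pv in H.
    rewrite (pb2_pair FC _ _ _ _ Hu), (pb2_pair FC _ _ _ _ Hv) in H.
    exact H.
  - intros T x Ex.
    assert (Hx : pu ∘ x = pv ∘ x).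
    { apply (pb_hom_ext FC); rewrite !comp_assoc; unfold pu, pv.
      - rewrite (pb1_pair FC _ _ _ _ Hu), (pb1_pair FC _ _ _ _ Hv). reflexivity.
      - rewrite (pb2_pair FC _ _ _ _ Hu), (pb2_pair FC _ _ _ _ Hv). exact Ex. }
    destruct (Huniv T x x Hx) as [y [[Hy _] Hyuniq]].
    exists y; split; [exact Hy|].
    intros y' Hy'. apply Hyuniq; split; [exact Hy'|].
    rewrite <- He12; exact Hy'.
Qed.

Lemma jointly_extremally_epic_cancel (FC : FinitelyComplete C) {A X Y T1 T2 : C}
    (f : Hom X Y) (u v : Hom A X) (a : Hom T1 A) (b : Hom T2 A) :
  jointly_extremally_epic a b -> f ∘ u = f ∘ v ->
  u ∘ a = v ∘ a -> u ∘ b = v ∘ b -> u = v.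
Proof.
  intros Hab Efuv Ea Eb.
  destruct (equalizer_exists FC f u v Efuv) as [E [e He]].
  destruct (proj2 He _ a Ea) as [a' [Ha _]].
  destruct (proj2 He _ b Eb) as [b' [Hb _]].
  apply (iso_equalizer_eq u v e He).
  exact (Hab E e a' b' (equalizer_mono u v e He) Ha Hb).
Qed.

End Equalizers.

Section PointMonoids.
Context {C : Category} (FC : FinitelyComplete C) (Sigma : @SplitClass C).
Hypothesis HSigma : fibrational Sigma.
Hypothesis HM : Sigma_Maltsev FC Sigma.
Context {X Y : C} (f : Hom X Y) (s : Hom Y X).
Hypothesis Hfs : Sigma X Y f s.

Lemma sigma_split : f ∘ s = idm Y.
Proof. destruct HSigma as [Hsplit _]. exact (Hsplit X Y f s Hfs). Qed.

Lemma kernel_pair_sections_jointly_extremally_epic :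
  jointly_extremally_epic
    (pb_pair FC f f (idm X) (s ∘ f)) (pb_pair FC f f (s ∘ f) (idm X)).
Proof. exact (HM X Y f s Hfs X f s sigma_split). Qed.

Lemma kernel_pair_hom_ext (k k' : Hom (pb FC f f) X) :
  f ∘ k = f ∘ pb1 FC f f -> f ∘ k' = f ∘ pb1 FC f f ->
  k ∘ pb_pair FC f f (idm X) (s ∘ f) = k' ∘ pb_pair FC f f (idm X) (s ∘ f) ->
  k ∘ pb_pair FC f f (s ∘ f) (idm X) = k' ∘ pb_pair FC f f (s ∘ f) (idm X) ->
  k = k'.
Proof.
  intros Hk Hk'.
  apply (jointly_extremally_epic_cancel FC f k k' _ _
           kernel_pair_sections_jointly_extremally_epic).
  rewrite Hk, Hk'; reflexivity.
Qed.

Lemma internal_monoid_unit (m : Hom (pb FC f f) X) (e : Hom Y X) :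
  is_internal_monoid FC f s m e -> e = s.
Proof.
  intros (_ & _ & _ & He & _). rewrite comp_id_r in He. exact He.
Qed.

Lemma internal_monoid_mul_over (m : Hom (pb FC f f) X) (e : Hom Y X) :
  is_internal_monoid FC f s m e -> f ∘ m = f ∘ pb1 FC f f.
Proof. intros (Hm & _). exact Hm. Qed.

Lemma internal_monoid_mul_sections (m : Hom (pb FC f f) X) (e : Hom Y X) :
  is_internal_monoid FC f s m e ->
  m ∘ pb_pair FC f f (idm X) (s ∘ f) = idm X /\
  m ∘ pb_pair FC f f (s ∘ f) (idm X) = idm X.
Proof.
  intro Hmon. pose proof (internal_monoid_unit m e Hmon) as ->.
  destruct Hmon as (_ & _ & _ & _ & Hl & Hr & _). split; assumption.
Qed.

Lemma sf_over : f ∘ (s ∘ f) = f ∘ idm X.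
Proof. rewrite comp_assoc, sigma_split, comp_id_l, comp_id_r. reflexivity. Qed.

End PointMonoids.

Theorem corollary2p5 (C : Category) (FC : FinitelyComplete C)
  (Sigma : SplitClass) (HSigma : fibrational Sigma)
  (HM : Sigma_Maltsev FC Sigma)
  (X Y : C) (f : Hom X Y) (s : Hom Y X) (Hfs : Sigma X Y f s) :
  (forall (m m' : Hom (pb FC f f) X) (e e' : Hom Y X),
     is_internal_monoid FC f s m e -> is_internal_monoid FC f s m' e' ->
     m = m' /\ e = e') /\
  (forall (m : Hom (pb FC f f) X) (e : Hom Y X),
     is_internal_monoid FC f s m e -> is_commutative_monoid FC f s m).
Proof.
  split.
  - intros m m' e e' Hmon Hmon'.
    destruct (internal_monoid_mul_sections FC f s m e Hmon) as [Hl Hr].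
    destruct (internal_monoid_mul_sections FC f s m' e' Hmon') as [Hl' Hr'].
    split.
    + apply (kernel_pair_hom_ext FC Sigma HSigma HM f s Hfs).
      * exact (internal_monoid_mul_over FC f s m e Hmon).
      * exact (internal_monoid_mul_over FC f s m' e' Hmon').
      * congruence.
      * congruence.
    + rewrite (internal_monoid_unit FC f s m e Hmon),
              (internal_monoid_unit FC f s m' e' Hmon').
      reflexivity.
  - intros m e Hmon. unfold is_commutative_monoid.
    pose proof (internal_monoid_mul_over FC f s m e Hmon) as Hm.
    destruct (internal_monoid_mul_sections FC f s m e Hmon) as [Hl Hr].
    pose proof (sf_over Sigma HSigma f s Hfs) as Hsf.
    apply (kernel_pair_hom_ext FC Sigma HSigma HM f s Hfs); [| exact Hm | ..].
    + rewrite comp_assoc, Hm, <- comp_assoc, (pb1_pair FC _ _ _ _ (kernel_pair_sym FC f)).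
      apply kernel_pair_sym.
    + rewrite <- comp_assoc, (pb_pair_swap FC f _ _ (eq_sym Hsf)). congruence.
    + rewrite <- comp_assoc, (pb_pair_swap FC f _ _ Hsf). congruence.
Qed.
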